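(* Consider the Geo/Geo/1/K queue described in the context and let the performance be the blocking indicator $Z_n=\mathbf 1\{X_n=K\}$ (an arrival in slot $n$ is blocked iff the queue is full). For an observed queue size $x\in\{0,\dots,K\}$ and lead time $L\ge0$, $$D_n(L)=\big|P^L(x,K)-\pi(K)\big|=\Big|\frac{2}{K+1}\beta^{\frac{K-x}{2}}\sum_{k=1}^K\frac{\gamma_k^L}{1-2\sqrt\beta\cos\frac{k\pi}{K+1}+\beta}\Big[\sin\tfrac{xk\pi}{K+1}-\sqrt\beta\sin\tfrac{(x+1)k\pi}{K+1}\Big]\sin\tfrac{Kk\pi}{K+1}\Big|,$$ where $\gamma_k=\alpha\mu+\bar\alpha\bar\mu+2\sqrt{\alpha\mu\bar\alpha\bar\mu}\cos\frac{k\pi}{K+1}$ and $\beta=\frac{\alpha\bar\mu}{\mu\bar\alpha}$.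
   Context: Geo/Geo/1/K queue: parameters $\alpha,\mu\in(0,1)$, $\bar\alpha=1-\alpha$, $\bar\mu=1-\mu$, buffer size $K\ge1$, with $\beta=\alpha\bar\mu/(\mu\bar\alpha)\ne1$. The queue size $(X_n)$ is a Markov chain on $\{0,\dots,K\}$ with $P(i,i+1)=\alpha\bar\mu$ for $0\le i\le K-1$; $P(i,i-1)=\mu\bar\alpha$ for $1\le i\le K$; $P(0,0)=1-\alpha\bar\mu$; $P(i,i)=\alpha\mu+\bar\alpha\bar\mu$ for $1\le i\le K-1$; $P(K,K)=1-\mu\bar\alpha$; all other entries $0$; $P^L$ is its $L$-th power. Its stationary distribution is $\pi(y)=\frac{1-\beta}{1-\beta^{K+1}}\beta^y$, and the chain is started in $\pi$. $\|p-q\|_{TV}=\frac12\sum_z|p(z)-q(z)|$; predictability $D_n(L)=\|\Pr(Z_{n+L}\in\cdot\mid X_n=x)-\Pr(Z_{n+L}\in\cdot)\|_{TV}$. *)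

From mathcomp Require Import all_boot all_order all_algebra.
From mathcomp Require Import reals trigo exp.
Unset Printing Implicit Defensive.
Import Order.TTheory GRing.Theory Num.Theory.
Local Open Scope ring_scope.

Section GeoGeo.
Variable R : realType.

Definition qbeta (a m : R) : R := (a * (1 - m)) / (m * (1 - a)).

Definition Pq (a m : R) (K : nat) : 'M[R]_(K.+1) :=
  \matrix_(i, j)
    if (j : nat) == i.+1 then a * (1 - m)
    else if (i : nat) == j.+1 then m * (1 - a)
    else if i == j then
      (if (i : nat) == 0%N then 1 - a * (1 - m)
       else if (i : nat) == K then 1 - m * (1 - a)
       else a * m + (1 - a) * (1 - m))
    else 0.

Definition piq (a m : R) (K : nat) : 'rV[R]_(K.+1) :=
  \row_(y < K.+1) ((1 - qbeta a m) / (1 - qbeta a m ^+ K.+1) * qbeta a m ^+ y).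

Definition tvd (T : finType) (p q : T -> R) : R :=
  2^-1 * \sum_(z : T) `|p z - q z|.

Definition Zlaw (K : nat) (v : 'rV[R]_(K.+1)) (b : bool) : R :=
  \sum_(y < K.+1 | (y == ord_max) == b) v 0 y.

(* predictability D_n(L): Pr(Z_{n+L} in . | X_n = x) = law of Z under P^L(x,.),
   Pr(Z_{n+L} in .) = law of Z under pi P^(n+L) (chain started in pi). *)
Definition Dpred (a m : R) (K n L : nat) (x : 'I_K.+1) : R :=
  @tvd bool (@Zlaw K (row x (Pq a m K ^+ L)))
      (@Zlaw K (piq a m K *m (Pq a m K ^+ (n + L)))).

Definition gammak (a m : R) (K k : nat) : R :=
  a * m + (1 - a) * (1 - m)
  + 2 * Num.sqrt (a * m * (1 - a) * (1 - m)) * cos (k%:R * pi / K.+1%:R).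

End GeoGeo.
Arguments qbeta {R}. Arguments Pq {R}. Arguments piq {R}. Arguments tvd {R T}. Arguments Zlaw {R K}. Arguments Dpred {R}. Arguments gammak {R}.

From mathcomp Require Import all_boot all_order all_algebra.
From mathcomp Require Import reals trigo exp.
From mathcomp.algebra_tactics Require Import ring lra.
From mathcomp.zify Require Import zify.

Set Implicit Arguments.
Unset Strict Implicit.
Unset Printing Implicit Defensive.

Import Order.TTheory GRing.Theory Num.Theory.
Local Open Scope ring_scope.

(* The blocking indicator takes two values, so D_n(L) = |P^L(x,K) - pi(K)|
   once one knows that pi is stationary.  The chain is reversible, so P is
   self-adjoint for the pi-weighted inner product and the Gram matrix
   V^T diag(pi) V of an eigenbasis V with distinct eigenvalues is diagonal,
   which inverts V.  With s = sqrt(beta) and th_k = k pi / (K+1), k = 1..K,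
   the vectors v_k(y) = s^-y (sin(y th_k) - s sin((y+1) th_k)) are
   eigenvectors for gamma_k: the factor s^-y turns the tridiagonal
   recurrence into the sine recurrence, and sin((K+1) th_k) = 0 makes both
   boundary rows reflecting.  Together with the constant vector they form
   the basis; expanding e_K - pi(K) 1 in it, the weighted norms
   (K+1)/2 (1 - 2 s cos th_k + beta) give the coefficients of the formula. *)

Lemma mulmx_pow_fixl (F : pzRingType) n (M : 'M[F]_n.+1) (u : 'rV[F]_n.+1) N :
  u *m M = u -> u *m M ^+ N = u.
Proof.
move=> uM; elim: N => [|N IH]; first by rewrite expr0 mulmx1.
by rewrite exprSr -mulmxE mulmxA IH.
Qed.

Lemma mulmx_pow_fixr (F : pzRingType) n (M : 'M[F]_n.+1) (c : 'cV[F]_n.+1) N :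
  M *m c = c -> M ^+ N *m c = c.
Proof.
move=> Mc; elim: N => [|N IH]; first by rewrite expr0 mul1mx.
by rewrite exprS -mulmxE -mulmxA IH.
Qed.

Lemma mulmx_const1E (R : pzSemiRingType) n (M : 'M[R]_n.+1) (x : 'I_n.+1) :
  (M *m (const_mx 1 : 'cV_n.+1)) x 0 = \sum_(y < n.+1) M x y.
Proof. by rewrite mxE; apply: eq_bigr => y _; rewrite mxE mulr1. Qed.

Section SpectralExpansion.
Variables (F : fieldType) (n : nat) (P V W : 'M[F]_n.+1) (d : 'rV[F]_n.+1).
Hypothesis PV : P *m V = V *m diag_mx d.

Lemma mxpow_eigen L : P ^+ L *m V = V *m diag_mx (\row_k (d 0 k ^+ L)).
Proof.
elim: L => [|L IH].
  by rewrite expr0 mul1mx mul_mx_diag; apply/matrixP => i j; rewrite !mxE mulr1.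
rewrite exprS -mulmxE -mulmxA IH mulmxA PV -mulmxA mulmx_diag.
by congr (_ *m diag_mx _); apply/matrixP => i j; rewrite !mxE exprS.
Qed.

Hypotheses (W_sym : W^T = W) (WP_sym : (W *m P)^T = W *m P).
Hypothesis d_inj : injective (d 0).

Let G := V^T *m W *m V.

Lemma gram_eigen_comm : G *m diag_mx d = diag_mx d *m G.
Proof.
have PtW : P^T *m W = W *m P by rewrite -WP_sym trmx_mul W_sym.
have -> : G *m diag_mx d = V^T *m (W *m P) *m V by rewrite /G -!mulmxA PV.
rewrite /G -{1}(tr_diag_mx d) !mulmxA -trmx_mul -PV trmx_mul.
by rewrite -(mulmxA _ P^T) PtW !mulmxA.
Qed.

Lemma gram_offdiag j k : j != k -> G j k = 0.
Proof.
move=> njk; have := congr1 (fun M : 'M_n.+1 => M j k) gram_eigen_comm.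
rewrite /= mul_mx_diag mul_diag_mx [LHS]mxE [RHS]mxE => /eqP.
rewrite mulrC -subr_eq0 -mulrBl mulf_eq0 subr_eq0 => /orP[/eqP eq_d|/eqP //].
by move: njk; rewrite (d_inj eq_d) eqxx.
Qed.

Hypothesis gram_diag_neq0 : forall k, G k k != 0.

Lemma eigen_expansion (w : 'cV[F]_n.+1) :
  w = V *m \col_k ((V^T *m W *m w) k 0 / G k k).
Proof.
pose Ginv := diag_mx (\row_k (G k k)^-1).
have GGinv : V^T *m W *m (V *m Ginv) = 1%:M.
  apply/matrixP => i j; rewrite mulmxA mul_mx_diag [LHS]mxE [_ 0 j]mxE [RHS]mxE.
  have [<-|nij] := eqVneq i j; first by rewrite mulfV ?gram_diag_neq0.
  by rewrite (gram_offdiag nij) mul0r.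
transitivity (V *m (Ginv *m (V^T *m W *m w))).
  by rewrite -[LHS]mul1mx -(mulmx1C GGinv) -!mulmxA.
congr (_ *m _); apply/matrixP => i j.
by rewrite mul_diag_mx [LHS]mxE [RHS]mxE [_ 0 i]mxE (ord1 j) mulrC.
Qed.

End SpectralExpansion.

Lemma sum_ord_eq_mul (R : pzSemiRingType) n j (F : nat -> R) :
  \sum_(y < n) ((y : nat) == j)%:R * F y = (j < n)%:R * F j.
Proof.
elim: n => [|n IH]; first by rewrite big_ord0 ltn0 mul0r.
rewrite big_ord_recr /= IH.
have [->|ne_jn] := eqVneq j n; first by rewrite ltnn ltnSn /= mulr0n mul0r add0r.
by rewrite mulr0n mul0r addr0 [in RHS]ltnS [in RHS]leq_eqVlt (negbTE ne_jn).
Qed.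

Section TrigSums.
Context {R : realType}.
Implicit Types (s t u : R) (n : nat).

Lemma sin_natr_mulpi n : sin (n%:R * pi) = 0 :> R.
Proof.
elim: n => [|n IH]; first by rewrite mul0r sin0.
by rewrite -addn1 natrD mulrDl mul1r sinDpi IH oppr0.
Qed.

Lemma sin_mul_sum_cos t u n :
  2 * sin t * \sum_(x < n) cos (x%:R * (2 * t) + u)
  = sin (n%:R * (2 * t) + u - t) - sin (u - t).
Proof.
elim: n => [|n IH]; first by rewrite big_ord0 mulr0 mul0r add0r subrr.
rewrite big_ord_recr /= mulrDr IH.
set z := n%:R * (2 * t) + u.
rewrite (_ : n.+1%:R * (2 * t) + u - t = z + t); last by rewrite /z -natr1; ring.
by rewrite (sinD z t) (sinB z t); ring.
Qed.

Lemma sum_cos_arith_eq0 t u n : sin t != 0 -> sin (n%:R * t) = 0 ->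
  \sum_(x < n) cos (x%:R * (2 * t) + u) = 0.
Proof.
move=> sin_t sin_nt.
have : 2 * sin t * \sum_(x < n) cos (x%:R * (2 * t) + u) = 0.
  rewrite sin_mul_sum_cos.
  rewrite (_ : n%:R * (2 * t) + u - t = (n%:R * t) *+ 2 + (u - t)); last by ring.
  by rewrite (sinD ((n%:R * t) *+ 2)) sin_mulr2n cos_mulr2n cos2sin2 sin_nt; ring.
by move/eqP; rewrite !mulf_eq0 (negbTE sin_t) pnatr_eq0 orbF => /eqP.
Qed.

Lemma sum_sqr_sin_shift s t n : sin t != 0 -> sin (n%:R * t) = 0 ->
  \sum_(x < n) (sin (x%:R * t) - s * sin (x.+1%:R * t)) ^+ 2
  = n%:R / 2 * (1 - 2 * s * cos t + s ^+ 2).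
Proof.
move=> sin_t sin_nt.
have sqr_lin (x : nat) : (sin (x%:R * t) - s * sin (x.+1%:R * t)) ^+ 2
  = ((1 + s ^+ 2) / 2 - s * cos t) - 2^-1 * cos (x%:R * (2 * t) + 0)
    + s * cos (x%:R * (2 * t) + t) - s ^+ 2 / 2 * cos (x%:R * (2 * t) + 2 * t).
  set z := x%:R * t.
  have -> : x.+1%:R * t = z + t by rewrite /z -natr1; ring.
  have -> : x%:R * (2 * t) + 0 = z *+ 2 by rewrite /z; ring.
  have -> : x%:R * (2 * t) + t = z + (z + t) by rewrite /z; ring.
  have -> : x%:R * (2 * t) + 2 * t = (z + t) *+ 2 by rewrite /z; ring.
  have -> : cos t = cos ((z + t) - z) by congr cos; ring.
  by rewrite (cosB (z + t) z) !cos_mulr2n (cosD z (z + t)) !cos2sin2; field.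
under eq_bigr do rewrite sqr_lin.
rewrite !big_split /= !sumrN -!mulr_sumr !sum_cos_arith_eq0 // !sumr_const !card_ord.
by rewrite -[2^-1 *+ n]mulr_natr -[cos t *+ n]mulr_natr; field.
Qed.

End TrigSums.

Section BirthDeathEigenvector.
Context {R : realType}.
Implicit Types (s th : R) (y : nat).

Definition bd_eigvec s th y : R :=
  s ^- y * (sin (y%:R * th) - s * sin (y.+1%:R * th)).

Lemma bd_eigvec_rec s th y : s != 0 ->
  bd_eigvec s th y + s ^+ 2 * bd_eigvec s th y.+2
  = 2 * s * cos th * bd_eigvec s th y.+1.
Proof.
move=> s0; rewrite /bd_eigvec.
set z := y.+1%:R * th.
have -> : y%:R * th = z - th by rewrite /z -natr1; ring.
have -> : y.+2%:R * th = z + th by rewrite /z -(natr1 y.+1); ring.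
have -> : y.+3%:R * th = z + th + th.
  by rewrite /z -(natr1 y.+2) -(natr1 y.+1); ring.
have sinB_th : sin (z - th) = 2 * cos th * sin z - sin (z + th).
  by rewrite sinB sinD; ring.
have sinD_2th : sin (z + th + th) = 2 * cos th * sin (z + th) - sin z.
  have -> : sin z = sin ((z + th) - th) by congr sin; ring.
  by rewrite sinB sinD; ring.
rewrite sinB_th sinD_2th !exprS.
by field; rewrite s0 expf_neq0.
Qed.

Lemma bd_eigvec_rec0 s th : s != 0 ->
  bd_eigvec s th 0 + s ^+ 2 * bd_eigvec s th 1 = 2 * s * cos th * bd_eigvec s th 0.
Proof.
move=> s0; rewrite /bd_eigvec !mul0r sin0 !mul1r.
have -> : 2%:R * th = th + th by rewrite -natr1; ring.
by rewrite sinD; field.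
Qed.

Lemma bd_eigvec_reflect s th n : s != 0 -> sin (n.+1%:R * th) = 0 ->
  bd_eigvec s th n.+1 = bd_eigvec s th n.
Proof.
move=> s0 sin_n1; rewrite /bd_eigvec sin_n1 mulr0 subr0.
set z := n.+1%:R * th.
have -> : n%:R * th = z - th by rewrite /z -natr1; ring.
have -> : n.+2%:R * th = z + th by rewrite /z -(natr1 n.+1); ring.
rewrite sinB sinD sin_n1 exprS.
by field; rewrite s0 expf_neq0.
Qed.

End BirthDeathEigenvector.

Section QueueMatrix.
Context {R : realType} (a m : R) (K : nat).

Let p := a * (1 - m).
Let q := m * (1 - a).

Definition Pq_diag (i : nat) : R :=
  if i == 0%N then 1 - p else if i == K then 1 - q else 1 - p - q.

Lemma Pq_entry (x y : 'I_K.+1) :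
  Pq a m K x y = ((y : nat) == x.+1)%:R * p + ((x : nat) == y.+1)%:R * q
                 + ((y : nat) == x)%:R * Pq_diag x.
Proof.
rewrite mxE /Pq_diag /p /q; case: x y => [x lt_xK] [y lt_yK] /=.
rewrite -val_eqE /=.
have [->|ne_y_x1] := eqVneq y x.+1; first by rewrite ltn_eqF // gtn_eqF //=; ring.
have [->|ne_x_y1] := eqVneq x y.+1; first by rewrite ltn_eqF //=; ring.
have [_|ne_yx] := eqVneq y x; last by rewrite /=; ring.
by rewrite /=; case: ifP => _; [|case: ifP => _]; ring.
Qed.

Lemma Pq_mul_fun (x : 'I_K.+1) (f : nat -> R) :
  \sum_(y < K.+1) Pq a m K x y * f y =
    (if (x : nat) is x'.+1 then q * f x' else 0) + Pq_diag x * f x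
    + (if (x < K)%N then p * f x.+1 else 0).
Proof.
under eq_bigr do rewrite Pq_entry !mulrDl -!(mulrA (_ == _)%:R).
rewrite !big_split /= (sum_ord_eq_mul _ _ (fun z => p * f z)).
rewrite (sum_ord_eq_mul _ _ (fun z => Pq_diag x * f z)) ltn_ord mul1r ltnS.
have -> : \sum_(y < K.+1) ((x : nat) == y.+1)%:R * (q * f y)
          = if (x : nat) is x'.+1 then q * f x' else 0.
  case: x => [[|x] lt_xK] /=; first by rewrite big1 // => y _; rewrite mul0r.
  under eq_bigr do rewrite eqSS eq_sym.
  by rewrite (sum_ord_eq_mul _ _ (fun z => q * f z)) (ltnW lt_xK) mul1r.
by case: ifP => _; rewrite /=; ring.
Qed.

Lemma Pq_stochastic : (1 <= K)%N ->
  Pq a m K *m const_mx 1 = const_mx 1 :> 'cV[R]_K.+1.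
Proof.
move=> K_gt0; apply/matrixP => x j; rewrite [RHS]mxE [LHS]mxE.
under eq_bigr do rewrite [const_mx _ _ _]mxE mulr1.
have /= := Pq_mul_fun x (fun=> 1); under eq_bigr do rewrite mulr1.
move=> ->; rewrite /Pq_diag.
case: x => [[|x] lt_xK] /=; first by rewrite K_gt0 add0r !mulr1 subrK.
have [<-|ne_xK] := eqVneq x.+1 K; first by rewrite ltnn /= /q; ring.
have -> : (x.+1 < K)%N by move: ne_xK lt_xK => /eqP; lia.
by rewrite /p /q; ring.
Qed.

Lemma Pq_eigvec s th (x : 'I_K.+1) : (1 <= K)%N -> s != 0 -> p = s ^+ 2 * q ->
  sin (K.+1%:R * th) = 0 ->
  \sum_(y < K.+1) Pq a m K x y * bd_eigvec s th y
  = (1 - p - q + q * (2 * s * cos th)) * bd_eigvec s th x.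
Proof.
move=> K_gt0 s0 ps2q sin_K1.
have step u0 u1 u2 : u0 + s ^+ 2 * u2 = 2 * s * cos th * u1 ->
    q * u0 + (1 - p - q) * u1 + p * u2 = (1 - p - q + q * (2 * s * cos th)) * u1.
  move=> rec; rewrite ps2q /q.
  rewrite (_ : u0 = 2 * s * cos th * u1 - s ^+ 2 * u2); last by rewrite -rec; ring.
  by ring.
rewrite Pq_mul_fun /Pq_diag.
case: x => [[|x] lt_xK] /=.
  rewrite K_gt0 -(step _ _ _ (bd_eigvec_rec0 th s0)).
  by rewrite /p /q; ring.
have [eq_xK|ne_xK] := eqVneq x.+1 K.
  rewrite -eq_xK ltnn -(step _ _ _ (bd_eigvec_rec th x s0)).
  rewrite [bd_eigvec _ _ x.+2]bd_eigvec_reflect //; last by rewrite eq_xK.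
  by rewrite /p /q; ring.
have -> : (x.+1 < K)%N by move: ne_xK lt_xK => /eqP; lia.
by rewrite -(step _ _ _ (bd_eigvec_rec th x s0)).
Qed.

End QueueMatrix.

Section QueueStationary.
Context {R : realType} (a m : R) (K : nat).

Lemma piq_reversible (i j : 'I_K.+1) : m * (1 - a) != 0 ->
  piq a m K 0 i * Pq a m K i j = piq a m K 0 j * Pq a m K j i.
Proof.
move=> q0; have pq : a * (1 - m) = qbeta a m * (m * (1 - a)) by rewrite divfK.
rewrite [piq _ _ _ 0 i]mxE [piq _ _ _ 0 j]mxE !Pq_entry.
case: i j => [i lt_iK] [j lt_jK] /=.
have [->|ne_j_i1] := eqVneq j i.+1.
  by rewrite ltn_eqF // gtn_eqF // ltn_eqF //= [_ ^+ i.+1]exprSr pq; ring.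
have [->|ne_i_j1] := eqVneq i j.+1.
  by rewrite ltn_eqF // gtn_eqF //= [_ ^+ j.+1]exprSr pq; ring.
by have [->|ne_ij] := eqVneq i j; rewrite //=; ring.
Qed.

Lemma piq_stationary : (1 <= K)%N -> m * (1 - a) != 0 ->
  piq a m K *m Pq a m K = piq a m K.
Proof.
move=> K_gt0 q0; apply/matrixP => i j; rewrite [LHS]mxE (ord1 i).
under eq_bigr do rewrite piq_reversible //.
by rewrite -mulr_sumr -mulmx_const1E Pq_stochastic // [const_mx _ _ _]mxE mulr1.
Qed.

Lemma sum_piq : 0 < qbeta a m -> qbeta a m != 1 ->
  \sum_(y < K.+1) piq a m K 0 y = 1.
Proof.
move=> b_gt0 b_neq1.
have bK1 : 1 - qbeta a m ^+ K.+1 != 0 by rewrite subr_eq0 eq_sym pexpr_eq1 // ltW.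
under eq_bigr do rewrite mxE.
rewrite -mulr_sumr mulrAC -[RHS](divff bK1); congr (_ / _).
by rewrite -[in RHS]opprB subrX1 -[in RHS]mulNr opprB.
Qed.

End QueueStationary.

Lemma tvd_Zlaw (R : realType) K (u v : 'rV[R]_K.+1) :
  \sum_(y < K.+1) u 0 y = 1 -> \sum_(y < K.+1) v 0 y = 1 ->
  tvd (Zlaw u) (Zlaw v) = `|u 0 ord_max - v 0 ord_max|.
Proof.
have Zlaw_true (z : 'rV[R]_K.+1) : Zlaw z true = z 0 ord_max.
  by rewrite /Zlaw (eq_bigl (pred1 ord_max)) ?big_pred1_eq // => y; exact: eqb_id.
have Zlaw_false (z : 'rV[R]_K.+1) : Zlaw z false = \sum_y z 0 y - z 0 ord_max.
  rewrite /Zlaw (eq_bigl (predC1 ord_max)) => [|y]; last exact: eqbF_neg.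
  by rewrite [X in _ = X - _](bigD1 ord_max) //= addrC addrK.
move=> u1 v1; rewrite /tvd big_bool /= !Zlaw_true !Zlaw_false u1 v1.
rewrite (_ : 1 - _ - _ = - (u 0 ord_max - v 0 ord_max)); last by ring.
by rewrite normrN; field.
Qed.

Definition spectral_term (R : realType) (a m : R) (K x L k : nat) : R :=
  gammak a m K k ^+ L
  / (1 - 2 * Num.sqrt (qbeta a m) * cos (k%:R * pi / K.+1%:R) + qbeta a m)
  * (sin (x%:R * k%:R * pi / K.+1%:R)
     - Num.sqrt (qbeta a m) * sin (x.+1%:R * k%:R * pi / K.+1%:R))
  * sin (K%:R * k%:R * pi / K.+1%:R).

Section QueueSpectrum.
Context {R : realType} {a m : R} {K : nat}.
Hypotheses (a_01 : 0 < a < 1) (m_01 : 0 < m < 1) (b_neq1 : qbeta a m != 1)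
  (K_gt0 : (1 <= K)%N).

Let p := a * (1 - m).
Let q := m * (1 - a).
Let b := qbeta a m.
Let s := Num.sqrt b.
Let th (k : nat) : R := k%:R * pi / K.+1%:R.

Let q_gt0 : 0 < q.
Proof. by case/andP: a_01 => ? ?; case/andP: m_01 => ? ?; apply: mulr_gt0; lra. Qed.

Let b_gt0 : 0 < b.
Proof.
by case/andP: a_01 => ? ?; case/andP: m_01 => ? ?; apply: divr_gt0; apply: mulr_gt0; lra.
Qed.

Let s_gt0 : 0 < s. Proof. by rewrite sqrtr_gt0. Qed.

Let sqr_s : s ^+ 2 = b. Proof. by rewrite sqr_sqrtr // ltW. Qed.

Let p_eq : p = s ^+ 2 * q.
Proof. by rewrite sqr_s /b /qbeta divfK // gt_eqF. Qed.

Let gammak_eq k : gammak a m K k = 1 - p - q + q * (2 * s * cos (th k)).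
Proof.
rewrite /gammak; have -> : a * m * (1 - a) * (1 - m) = s ^+ 2 * q ^+ 2.
  by rewrite [q ^+ 2]expr2 mulrA -p_eq /p /q; ring.
rewrite sqrtrM ?sqr_ge0 // !sqrtr_sqr !gtr0_norm // /th /p /q.
by ring.
Qed.

Let th_in k : (0 < k < K.+1)%N -> 0 < th k < pi.
Proof.
case/andP => k_gt0 k_lt.
have pi_gt0 := pi_gt0 R.
rewrite /th divr_gt0 ?mulr_gt0 ?ltr0n //= ltr_pdivrMr ?ltr0n //.
by rewrite mulrC ltr_pM2l // ltr_nat.
Qed.

Let sin_th_gt0 k : (0 < k < K.+1)%N -> 0 < sin (th k).
Proof. by move/th_in; apply: sin_gt0_pi. Qed.

Let sin_mul_th k : sin (K.+1%:R * th k) = 0.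
Proof.
by rewrite /th mulrC divfK ?pnatr_eq0 // sin_natr_mulpi.
Qed.

Let th_itv k : (0 < k < K.+1)%N -> th k \in `[0, pi].
Proof. by move/th_in/andP=> [? ?]; rewrite in_itv /= !ltW. Qed.

Let cos_th_lt1 k : (0 < k < K.+1)%N -> cos (th k) < 1.
Proof.
move=> kP; rewrite -cos0 ltr_cos ?th_itv //; first by case/andP: (th_in kP).
by rewrite in_itv /= lexx pi_ge0.
Qed.

Let th_inj j k : (0 < j < K.+1)%N -> (0 < k < K.+1)%N ->
  cos (th j) = cos (th k) -> j = k.
Proof.
move=> jP kP /(cos_inj (th_itv jP) (th_itv kP)).
rewrite /th => /(congr1 (fun z => z * K.+1%:R / pi)).
rewrite !divfK ?pnatr_eq0 // !mulfK ?gt_eqF ?pi_gt0 //.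
by move/eqP; rewrite eqr_nat => /eqP.
Qed.

Let den_gt0 k : (0 < k < K.+1)%N -> 0 < 1 - 2 * s * cos (th k) + b.
Proof.
move=> kP; have := sin_th_gt0 kP; have := cos2Dsin2 (th k).
have := sqr_ge0 (s - cos (th k)); rewrite -sqr_s; nra.
Qed.

Let gammak_neq1 k : (0 < k < K.+1)%N -> gammak a m K k != 1.
Proof.
move=> kP; rewrite gammak_eq p_eq lt_eqF //.
have : 0 < q * ((s - 1) ^+ 2 + 2 * s * (1 - cos (th k))).
  rewrite mulr_gt0 // ltr_wpDl ?sqr_ge0 // !mulr_gt0 //.
  by rewrite subr_gt0 cos_th_lt1.
lra.
Qed.

Let V : 'M[R]_K.+1 :=
  \matrix_(y, k) if (k : nat) == 0%N then 1 else bd_eigvec s (th k) y.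
Let d : 'rV[R]_K.+1 := \row_k if (k : nat) == 0%N then 1 else gammak a m K k.
Let W : 'M[R]_K.+1 := diag_mx (piq a m K).

Let PV : Pq a m K *m V = V *m diag_mx d.
Proof.
apply/matrixP => x k; rewrite mul_mx_diag [LHS]mxE [RHS]mxE [V x k]mxE [d 0 k]mxE.
under eq_bigr do rewrite [V _ k]mxE.
have [k0|k0] := eqVneq (k : nat) 0%N.
  under eq_bigr do rewrite mulr1.
  by rewrite -mulmx_const1E Pq_stochastic // mxE mulr1.
by rewrite Pq_eigvec ?gt_eqF ?sin_mul_th // 1?mulrC ?gammak_eq.
Qed.

Let d_inj : injective (d 0).
Proof.
have kP (i : 'I_K.+1) : (i : nat) != 0%N -> (0 < i < K.+1)%N.
  by rewrite lt0n ltn_ord => ->.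
move=> j k; rewrite !mxE.
have [j0|j0] := eqVneq (j : nat) 0%N; have [k0|k0] := eqVneq (k : nat) 0%N => eq_d.
- by apply: val_inj; rewrite /= j0 k0.
- by have := gammak_neq1 (kP _ k0); rewrite -eq_d eqxx.
- by have := gammak_neq1 (kP _ j0); rewrite eq_d eqxx.
apply: val_inj; apply: th_inj; rewrite ?kP //.
have q2s : q * 2 * s != 0.
  exact: lt0r_neq0 (mulr_gt0 (mulr_gt0 q_gt0 (ltr0Sn _ 1)) s_gt0).
by apply: (mulfI q2s); move: eq_d; rewrite !gammak_eq !mulrA => /addrI.
Qed.

Let W_sym : W^T = W. Proof. exact: tr_diag_mx. Qed.

Let WP_sym : (W *m Pq a m K)^T = W *m Pq a m K.
Proof.
apply/matrixP => i j; rewrite [LHS]mxE !mul_diag_mx [LHS]mxE [RHS]mxE.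
exact: esym (piq_reversible i j (lt0r_neq0 q_gt0)).
Qed.

Let c0 := (1 - b) / (1 - b ^+ K.+1).

Let c0_neq0 : c0 != 0.
Proof.
rewrite mulf_neq0 ?invr_eq0 ?subr_eq0 1?eq_sym //.
by rewrite pexpr_eq1 // ltW.
Qed.

Let piqE y : piq a m K 0 y = c0 * (s ^+ y) ^+ 2.
Proof. by rewrite mxE -exprAC sqr_s. Qed.

Let gramE j k :
  (V^T *m W *m V) j k = \sum_(y < K.+1) V y j * piq a m K 0 y * V y k.
Proof.
rewrite [LHS]mxE; apply: eq_bigr => y _.
by rewrite mul_mx_diag [X in X * _]mxE [V^T _ _]mxE.
Qed.

Let gram00 : (V^T *m W *m V) ord0 ord0 = 1.
Proof.
rewrite gramE -(sum_piq K b_gt0 b_neq1); apply: eq_bigr => y _.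
by rewrite [V y ord0]mxE mul1r mulr1.
Qed.

Let gram_kk (k : 'I_K.+1) : (k : nat) != 0%N ->
  (V^T *m W *m V) k k = c0 * (K.+1%:R / 2 * (1 - 2 * s * cos (th k) + b)).
Proof.
move=> k0; have kP : (0 < k < K.+1)%N by rewrite lt0n k0 ltn_ord.
rewrite gramE -sqr_s -sum_sqr_sin_shift ?lt0r_neq0 ?sin_th_gt0 ?sin_mul_th //.
rewrite mulr_sumr; apply: eq_bigr => y _.
rewrite [V y k]mxE (negbTE k0) piqE /bd_eigvec.
by field; rewrite expf_neq0 // lt0r_neq0.
Qed.

Let gram_neq0 k : (V^T *m W *m V) k k != 0.
Proof.
have [k0|k0] := eqVneq (k : nat) 0%N.
  by rewrite (_ : k = ord0) ?gram00 ?oner_neq0 //; apply: val_inj.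
have kP : (0 < k < K.+1)%N by rewrite lt0n k0 ltn_ord.
rewrite gram_kk // mulf_neq0 // lt0r_neq0 // mulr_gt0 ?den_gt0 //.
by rewrite divr_gt0 ?ltr0n.
Qed.

Let w : 'cV[R]_K.+1 :=
  \col_y (((y : 'I_K.+1) == ord_max)%:R - piq a m K 0 ord_max).

Let coef_w (k : 'I_K.+1) : (V^T *m W *m w) k 0
  = piq a m K 0 ord_max * (V ord_max k - (V^T *m W *m V) ord0 k).
Proof.
rewrite [LHS]mxE (eq_bigr (fun y => (y == ord_max)%:R * (V y k * piq a m K 0 y)
  - piq a m K 0 ord_max * (V y ord0 * piq a m K 0 y * V y k))) => [|y _]; last first.
  rewrite mul_mx_diag [X in X * _]mxE [V^T _ _]mxE [w _ _]mxE [V y ord0]mxE /=.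
  by ring.
rewrite sumrB -mulr_sumr -gramE (bigD1 ord_max) //= eqxx mul1r big1 ?addr0.
  by ring.
by move=> y /negbTE ->; rewrite mul0r.
Qed.

Let spectral_termE (x k : 'I_K.+1) L : (k : nat) != 0%N ->
  V x k * gammak a m K k ^+ L
    * (V^T *m W *m w) k 0 / (V^T *m W *m V) k k
  = 2 / K.+1%:R * s ^+ (K - x) * spectral_term a m K x L k.
Proof.
move=> k0; have kP : (0 < k < K.+1)%N by rewrite lt0n k0 ltn_ord.
have thE y : y%:R * k%:R * pi / K.+1%:R = y%:R * th k by rewrite /th !mulrA.
have G0k : (V^T *m W *m V) ord0 k = 0.
  by apply: (gram_offdiag PV W_sym WP_sym d_inj); rewrite -val_eqE eq_sym.
rewrite coef_w G0k subr0 gram_kk // piqE.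
rewrite [V x k]mxE [V ord_max k]mxE (negbTE k0) /bd_eigvec /= sin_mul_th mulr0 subr0.
rewrite /spectral_term !thE -/(th k) -/b -/s.
have -> : s ^+ K = s ^+ (K - x) * s ^+ x by rewrite -exprD subnK // -ltnS.
have s0 := lt0r_neq0 s_gt0; have den0 := lt0r_neq0 (den_gt0 kP).
by field; rewrite den0 nat1r pnatr_eq0 c0_neq0 !expf_neq0.
Qed.

Let powR_half (x : 'I_K.+1) : b `^ ((K%:R - (x : nat)%:R) / 2) = s ^+ (K - x).
Proof.
have x_le_K : (x <= K)%N by rewrite -ltnS.
rewrite -natrB // mulrC powRrM powR12_sqrt ?(ltW b_gt0) //.
by rewrite powR_mulrn // sqrtr_ge0.
Qed.

Lemma Pq_pow_sub_piq L (x : 'I_K.+1) :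
  (Pq a m K ^+ L) x ord_max - piq a m K 0 ord_max
  = 2 / K.+1%:R * qbeta a m `^ ((K%:R - (x : nat)%:R) / 2)
    * \sum_(1 <= k < K.+1) spectral_term a m K x L k.
Proof.
have PLw : (Pq a m K ^+ L *m w) x 0
           = (Pq a m K ^+ L) x ord_max - piq a m K 0 ord_max.
  rewrite [LHS]mxE (eq_bigr (fun y => (y == ord_max)%:R * (Pq a m K ^+ L) x y
    - piq a m K 0 ord_max * (Pq a m K ^+ L) x y)) => [|y _]; last first.
    by rewrite [w _ _]mxE; ring.
  rewrite sumrB -mulr_sumr -mulmx_const1E mulmx_pow_fixr ?Pq_stochastic //.
  rewrite [const_mx _ _ _]mxE mulr1 (bigD1 ord_max) //= eqxx mul1r big1 ?addr0 //.
  by move=> y /negbTE ->; rewrite mul0r.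
rewrite -PLw {1}(eigen_expansion PV W_sym WP_sym d_inj gram_neq0 w).
rewrite mulmxA (mxpow_eigen PV) mul_mx_diag [LHS]mxE big_ord_recl.
rewrite [X in X + _](_ : _ = 0) ?add0r; last first.
  rewrite [_ ord0 0]mxE coef_w gram00 [V ord_max ord0]mxE /=.
  by rewrite subrr mulr0 mul0r mulr0.
rewrite powR_half big_add1 big_mkord mulr_sumr; apply: eq_bigr => k _.
rewrite [_ x _]mxE [_ 0 (lift _ _)]mxE [_ (lift _ _) 0]mxE [d 0 _]mxE /=.
by rewrite mulrA spectral_termE.
Qed.

Lemma Dpred_blocking n L (x : 'I_K.+1) :
  Dpred a m K n L x = `|(Pq a m K ^+ L) x ord_max - piq a m K 0 ord_max|.
Proof.
have PL_stoch := mulmx_pow_fixr L (Pq_stochastic a m K_gt0).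
rewrite /Dpred mulmx_pow_fixl ?piq_stationary ?lt0r_neq0 // tvd_Zlaw ?mxE //.
  under eq_bigr do rewrite mxE.
  by rewrite -mulmx_const1E PL_stoch [const_mx _ _ _]mxE.
exact: sum_piq K b_gt0 b_neq1.
Qed.

End QueueSpectrum.

Theorem proposition2 (R : realType) (a m : R) (K : nat) (x : 'I_K.+1) (n L : nat) :
  0 < a < 1 -> 0 < m < 1 -> qbeta a m != 1 -> (1 <= K)%N ->
  Dpred a m K n L x = `|(Pq a m K ^+ L)%R x ord_max - piq a m K 0 ord_max| /\
  Dpred a m K n L x =
    `| 2 / K.+1%:R * (qbeta a m `^ ((K%:R - (x : nat)%:R) / 2)) *
       \sum_(1 <= k < K.+1)
         (gammak a m K k ^+ L
          / (1 - 2 * Num.sqrt (qbeta a m) * cos (k%:R * pi / K.+1%:R) + qbeta a m)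
          * (sin ((x : nat)%:R * k%:R * pi / K.+1%:R)
             - Num.sqrt (qbeta a m) * sin (((x : nat).+1)%:R * k%:R * pi / K.+1%:R))
          * sin (K%:R * k%:R * pi / K.+1%:R)) |.
Proof.
move=> a_01 m_01 b_neq1 K_gt0.
rewrite (Dpred_blocking a_01 m_01 b_neq1 K_gt0).
by rewrite (Pq_pow_sub_piq a_01 m_01 b_neq1 K_gt0).
Qed.
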